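(* Let $\mathsf{G}M_0>0$, $R_0>0$, $\Omega\in\mathbb{R}$ and $R>R_0$. For $\bm{x}=(x^1,x^2,x^3)\in\mathbb{R}^3$ put $r=\|\bm{x}\|$, $\varpi=\sqrt{(x^1)^2+(x^2)^2}$, and let $$\Upsilon(\bm{x})=\mathsf{G}M_0\Big(\frac1r-\frac1R\Big)+\frac{\Omega^2}{2}\varpi^2 .$$ Let $\mathfrak{U}_0$ be the connected component of the open set $\{\bm{x}:\ r>R_0,\ \Upsilon(\bm{x})>0\}$ which contains the shell $\{R_0<r<R\}$, and put $\kappa=\dfrac{\Omega^2R_0^3}{2\mathsf{G}M_0}$. Then the following are equivalent: (i) $\mathfrak{U}_0$ is bounded, i.e. the axially and equatorially symmetric static stationary density $\rho=\big(\frac{\gamma-1}{\mathsf{A}\gamma}\Upsilon\big)^{1/(\gamma-1)}1_{\mathfrak{U}_0}$ (with zero relative velocity, constants $\mathsf{A}>0$, $1<\gamma<2$) is compactly supported, its stratosphere height at the North Pole being $R-R_0$; (ii) $\kappa\le \dfrac{4}{27}\Big(\dfrac{R_0}{R}\Big)^3$.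
   Context: This concerns static stationary solutions ($\bm v=\bm 0$) of the isentropic compressible Euler equations in a frame rotating with constant angular velocity $\Omega$ about the $x^3$-axis, outside the ball $\{r\le R_0\}$, with geopotential $-\mathsf{G}M_0/r-\Omega^2\varpi^2/2$ and pressure $P=\mathsf{A}\rho^\gamma$; for such solutions $\Upsilon=\frac{\mathsf{A}\gamma}{\gamma-1}\rho^{\gamma-1}$ equals $-(\text{geopotential})-\mathsf{G}M_0/R$ where positive. *)

From HB Require Import structures.
From mathcomp Require Import all_boot all_order all_algebra.
From mathcomp Require Import all_classical all_reals all_analysis.
Set Implicit Arguments. Unset Strict Implicit. Unset Printing Implicit Defensive.
Import Order.TTheory GRing.Theory Num.Theory.
Import numFieldNormedType.Exports.
Local Open Scope ring_scope.
Local Open Scope classical_set_scope.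

(* Points of R^3 are row vectors 'rV[R]_3 (product = Euclidean topology). *)
Definition x1 {R : realType} (x : 'rV[R]_3) : R := x ord0 (@Ordinal 3 0 isT).
Definition x2 {R : realType} (x : 'rV[R]_3) : R := x ord0 (@Ordinal 3 1 isT).
Definition x3 {R : realType} (x : 'rV[R]_3) : R := x ord0 (@Ordinal 3 2 isT).

Definition rad {R : realType} (x : 'rV[R]_3) : R :=
  Num.sqrt (x1 x ^+ 2 + x2 x ^+ 2 + x3 x ^+ 2).
Definition varpi {R : realType} (x : 'rV[R]_3) : R :=
  Num.sqrt (x1 x ^+ 2 + x2 x ^+ 2).

Definition Upsilon {R : realType} (GM0 Om Rr : R) (x : 'rV[R]_3) : R :=
  GM0 * ((rad x)^-1 - Rr^-1) + Om ^+ 2 / 2 * varpi x ^+ 2.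

Definition posregion {R : realType} (GM0 R0 Om Rr : R) : set 'rV[R]_3 :=
  [set x | R0 < rad x /\ 0 < Upsilon GM0 Om Rr x].

Definition shell {R : realType} (R0 Rr : R) : set 'rV[R]_3 :=
  [set x | R0 < rad x /\ rad x < Rr].

Definition bounded3 {R : realType} (A : set 'rV[R]_3) : Prop :=
  exists M : R, forall x, A x -> rad x <= M.

From Pilot Require Import Defs.
From HB Require Import structures.
From mathcomp Require Import all_boot all_order all_algebra.
From mathcomp Require Import all_classical all_reals all_analysis.
From mathcomp Require Import ring lra.
Import Order.TTheory GRing.Theory Num.Theory.
Import numFieldNormedType.Exports.
Local Open Scope ring_scope.
Local Open Scope classical_set_scope.

(* Upsilon depends on x only through r and varpi <= r.  If 27 Om^2 R^3 <= 8 GM0,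
   then Upsilon <= 0 wherever r >= 3R/2 >= varpi; the image of the component
   under varpi is an interval containing a value below R, so it stays below 3R/2,
   and the component lies in the ball of radius 3R/2.  Otherwise
   Upsilon (s u) = GM0 (1/s - 1/R) + Om^2 s^2 / 2 > 0 for every s > 0 and every
   horizontal unit vector u; an arc of the sphere through x0, which lies in the
   shell, joins x0 to such a ray, so the component is unbounded.  Finally
   kappa <= 4/27 (R0/R)^3 is just 27 Om^2 R^3 <= 8 GM0. *)

Section EuclideanSpace.
Context {R : realType}.
Implicit Types (x y : 'rV[R]_3) (a b r t : R).

Definition dot3 x y := x1 x * x1 y + x2 x * x2 y + x3 x * x3 y.

Lemma rad_ge0 x : 0 <= Defs.rad x.
Proof. exact: sqrtr_ge0. Qed.

Lemma rad_sqr x : Defs.rad x ^+ 2 = x1 x ^+ 2 + x2 x ^+ 2 + x3 x ^+ 2.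
Proof. by rewrite sqr_sqrtr // !addr_ge0 ?sqr_ge0. Qed.

Lemma varpi_le_rad x : varpi x <= Defs.rad x.
Proof. by rewrite ler_sqrt ?lerDl ?sqr_ge0 // !addr_ge0 ?sqr_ge0. Qed.

Lemma radZ a x : Defs.rad (a *: x) = `|a| * Defs.rad x.
Proof.
by rewrite /Defs.rad /x1 /x2 /x3 !mxE !exprMn -!mulrDr sqrtrM ?sqr_ge0 // sqrtr_sqr.
Qed.

Lemma varpiZ a x : varpi (a *: x) = `|a| * varpi x.
Proof.
by rewrite /varpi /x1 /x2 /x3 !mxE !exprMn -!mulrDr sqrtrM ?sqr_ge0 // sqrtr_sqr.
Qed.

Lemma rad_sqr_comb a b x y :
  Defs.rad (a *: x + b *: y) ^+ 2 =
  a ^+ 2 * Defs.rad x ^+ 2 + 2 * a * b * dot3 x y + b ^+ 2 * Defs.rad y ^+ 2.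
Proof. by rewrite !rad_sqr /dot3 /x1 /x2 /x3 !mxE; ring. Qed.

Lemma coord_sqr_continuous (i : 'I_3) : continuous (fun x : 'rV[R]_3 => x ord0 i ^+ 2).
Proof. by move=> x; apply: continuous_comp (@exprn_continuous R 2 _); exact: coord_continuous. Qed.

Lemma rad_continuous : continuous (@Defs.rad R).
Proof.
move=> x; have sq := coord_sqr_continuous.
exact: continuous_comp (continuousD (continuousD (sq _ x) (sq _ x)) (sq _ x))
  (@sqrt_continuous R _).
Qed.

Lemma varpi_continuous : continuous (@varpi R).
Proof.
move=> x; have sq := coord_sqr_continuous.
exact: continuous_comp (continuousD (sq _ x) (sq _ x)) (@sqrt_continuous R _).
Qed.

Lemma exists_equatorial_unit x : exists u, [/\ Defs.rad u = 1, varpi u = 1 & 0 <= dot3 x u].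
Proof.
exists ((if 0 <= x1 x then 1 else -1) *: \row_(j < 3) (j == ord0)%:R).
rewrite radZ varpiZ /Defs.rad /varpi /dot3 /x1 /x2 /x3 !mxE /=.
rewrite !expr0n /= !addr0 expr1n sqrtr1 mulr1 !mulr0 !mulr1 !addr0.
by case: leP => x1_sign; rewrite ?normrN normr1 ?mulr1 ?mulrN1 ?oppr_ge0 ?(ltW x1_sign).
Qed.

Lemma sphere_arc {x y r} : 0 < r -> Defs.rad x = r -> Defs.rad y = r -> 0 <= dot3 x y ->
  exists P : set 'rV[R]_3, [/\ connected P, P x, P y & P `<=` [set z | Defs.rad z = r]].
Proof.
move=> r_gt0 rx ry dot_ge0.
(* Squared weights keep [v t] nonzero for every real [t], not only on [0, 1]. *)
pose v t := (1 - t) ^+ 2 *: x + t ^+ 2 *: y.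
have v_gt0 t : 0 < Defs.rad (v t).
  have : 0 < Defs.rad (v t) ^+ 2.
    rewrite rad_sqr_comb rx ry.
    have : 0 < (((1 - t) ^+ 2) ^+ 2 + (t ^+ 2) ^+ 2) * r ^+ 2.
      rewrite pmulr_lgt0 ?exprn_gt0 //.
      have := sqr_ge0 (2 * t - 1); have := sqr_ge0 ((1 - t) ^+ 2 - t ^+ 2); nra.
    have : 0 <= 2 * (1 - t) ^+ 2 * t ^+ 2 * dot3 x y.
      by apply: mulr_ge0 dot_ge0; rewrite mulr_ge0 ?sqr_ge0 // mulr_ge0 ?sqr_ge0.
    lra.
  by have := rad_ge0 (v t); nra.
have v_cont : continuous v.
  have sq_cont : continuous (fun s : R => s ^+ 2) := @exprn_continuous R 2.
  have sqB_cont : continuous (fun s : R => (1 - s) ^+ 2).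
    move=> s; exact: continuous_comp
      (continuousB (@cst_continuous R R 1 s) (@cvg_id _ (nbhs s))) (sq_cont _).
  move=> t; exact: continuousD
    (continuousZ (sqB_cont t) (@cst_continuous R _ x t))
    (continuousZ (sq_cont t) (@cst_continuous R _ y t)).
pose p t := (r / Defs.rad (v t)) *: v t.
have p_rad t : Defs.rad (p t) = r.
  by rewrite radZ ger0_norm ?divr_ge0 ?ltW // divfK // gt_eqF.
have p_cont : continuous p.
  move=> t; have rad_v_cont := continuous_comp (v_cont t) (rad_continuous _).
  have inv_cont := @continuousV _ _ (Defs.rad \o v) t (lt0r_neq0 (v_gt0 t)) rad_v_cont.
  have scal_cont := continuousM (@cst_continuous R R r t) inv_cont.
  exact: continuousZ scal_cont (v_cont t).
have p0 : p 0 = x.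
  by rewrite /p /v subr0 expr1n scale1r expr0n /= scale0r addr0 rx divff ?gt_eqF ?scale1r.
have p1 : p 1 = y.
  by rewrite /p /v subrr expr0n /= scale0r add0r expr1n scale1r ry divff ?gt_eqF ?scale1r.
exists (p @` `[0, 1]); split.
- apply: connected_continuous_connected; first exact: segment_connected.
  exact: continuous_subspaceT.
- by exists 0 => //=; rewrite in_itv /= lexx ler01.
- by exists 1 => //=; rewrite in_itv /= lexx ler01.
- by move=> _ [t _ <-].
Qed.

End EuclideanSpace.

Section UpsilonProfile.
Context {R : realType}.
Variables GM0 Om Rr : R.
Hypotheses (GM0_gt0 : 0 < GM0) (Rr_gt0 : 0 < Rr).

Definition ups (r w : R) := GM0 * (r^-1 - Rr^-1) + Om ^+ 2 / 2 * w ^+ 2.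

Lemma UpsilonE x : Upsilon GM0 Om Rr x = ups (Defs.rad x) (varpi x).
Proof. by []. Qed.

Lemma ups_gt0 r w : 0 < r < Rr -> 0 < ups r w.
Proof.
case/andP=> r_gt0 r_lt_Rr; apply: ltr_wpDr.
  by rewrite mulr_ge0 ?sqr_ge0 // mulr_ge0 ?sqr_ge0 ?invr_ge0.
have Rr_pos : 0 < Rr := lt_trans r_gt0 r_lt_Rr.
by rewrite mulr_gt0 // subr_gt0 ltf_pV2 ?posrE.
Qed.

(* In the critical case 27 Om^2 R^3 = 8 GM0, [s |-> ups s s] has minimum 0 at s = 3R/2. *)
Lemma ups_le0 r w : 27 * Om ^+ 2 * Rr ^+ 3 <= 8 * GM0 ->
  3 / 2 * Rr <= r -> 0 <= w <= 3 / 2 * Rr -> ups r w <= 0.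
Proof.
move=> crit cr /andP[w_ge0 cw]; set c := 3 / 2 * Rr in cr cw.
have c_gt0 : 0 < c by rewrite mulr_gt0.
have r_gt0 : 0 < r := lt_le_trans c_gt0 cr.
apply: (@le_trans _ _ (ups c c)).
  apply: lerD; apply: ler_wpM2l.
  - exact: ltW.
  - by rewrite lerD2r lef_pV2 ?posrE.
  - by rewrite mulr_ge0 ?sqr_ge0.
  - by rewrite ler_pXn2r // nnegrE ltW.
have -> : ups c c = (27 * Om ^+ 2 * Rr ^+ 3 - 8 * GM0) / (24 * Rr).
  by rewrite /ups /c; field; rewrite gt_eqF.
by rewrite ler_pdivrMr ?mulr_gt0 // mul0r subr_le0.
Qed.

Lemma ups_diag_gt0 s : 8 * GM0 < 27 * Om ^+ 2 * Rr ^+ 3 -> 0 < s -> 0 < ups s s.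
Proof.
move=> crit s_gt0; rewrite -(pmulr_rgt0 _ s_gt0).
set y := s / Rr.
have -> : s * ups s s = GM0 * (1 - y) + Om ^+ 2 * Rr ^+ 3 / 2 * y ^+ 3.
  by rewrite /ups /y; field; rewrite !gt_eqF.
have y_gt0 : 0 < y by rewrite divr_gt0.
have y3_gt0 : 0 < y ^+ 3 by rewrite exprn_gt0.
have cubic_ge0 : 0 <= 1 - y + 4 / 27 * y ^+ 3.
  have -> : 1 - y + 4 / 27 * y ^+ 3 = (y - 3 / 2) ^+ 2 * (4 / 27 * y + 4 / 9) by field.
  by apply: mulr_ge0; [exact: sqr_ge0 | lra].
have := mulr_ge0 (ltW GM0_gt0) cubic_ge0.
have : 0 < (Om ^+ 2 * Rr ^+ 3 / 2 - 4 / 27 * GM0) * y ^+ 3 by rewrite mulr_gt0 //; lra.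
nra.
Qed.

End UpsilonProfile.

Lemma kappa_le_iff (R : realType) (GM0 R0 Om Rr : R) :
  0 < GM0 -> 0 < R0 -> 0 < Rr ->
  (Om ^+ 2 * R0 ^+ 3 / (2 * GM0) <= 4 / 27 * (R0 / Rr) ^+ 3) <->
  (27 * Om ^+ 2 * Rr ^+ 3 <= 8 * GM0).
Proof.
move=> GM0_gt0 R0_gt0 Rr_gt0.
have -> : (Om ^+ 2 * R0 ^+ 3 / (2 * GM0) <= 4 / 27 * (R0 / Rr) ^+ 3) =
  (0 <= (8 * GM0 - 27 * Om ^+ 2 * Rr ^+ 3) * (R0 ^+ 3 / (54 * GM0 * Rr ^+ 3))).
  by rewrite -subr_ge0; congr (0 <= _); field; rewrite !gt_eqF.
by rewrite pmulr_lge0 ?subr_ge0 // divr_gt0 ?exprn_gt0 ?mulr_gt0 ?exprn_gt0.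
Qed.

Section ComponentOfPositivity.
Variables (R : realType) (GM0 R0 Om Rr : R) (x0 : 'rV[R]_3).
Hypotheses (GM0_gt0 : 0 < GM0) (R0_gt0 : 0 < R0) (x0_shell : shell R0 Rr x0).

Lemma shell_sub_posregion : shell R0 Rr `<=` posregion GM0 R0 Om Rr.
Proof.
move=> x [R0x xRr]; split => //.
by apply: ups_gt0 => //; rewrite xRr (lt_trans R0_gt0 R0x).
Qed.

Lemma component_bounded : 27 * Om ^+ 2 * Rr ^+ 3 <= 8 * GM0 ->
  bounded3 (connected_component (posregion GM0 R0 Om Rr) x0).
Proof.
move=> crit; have [_ x0_Rr] := x0_shell.
have Rr_gt0 : 0 < Rr := le_lt_trans (rad_ge0 x0) x0_Rr.
set C := connected_component _ x0; set c := 3 / 2 * Rr.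
have no_far z : posregion GM0 R0 Om Rr z -> c <= Defs.rad z -> varpi z <= c -> False.
  move=> [_]; rewrite UpsilonE => Ups_z cz wz.
  have : ups GM0 Om Rr (Defs.rad z) (varpi z) <= 0.
    by apply: ups_le0 => //; rewrite sqrtr_ge0 wz.
  by rewrite leNgt Ups_z.
have varpi_lt y : C y -> varpi y < c.
  move=> Cy; rewrite ltNge; apply/negP => cy.
  have C_itv : is_interval (varpi @` C).
    apply/connected_intervalP/connected_continuous_connected.
      exact: component_connected.
    exact/continuous_subspaceT/varpi_continuous.
  have x0_c : varpi x0 <= c.
    have Rr_c : Rr <= c.
      by rewrite /c ler_peMl ?ltW // ltr_pdivlMr // mul1r ltr_nat.
    by rewrite (le_trans (varpi_le_rad x0)) // ltW // (lt_le_trans x0_Rr).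
  have [z Cz wz] : (varpi @` C) c.
    apply: (C_itv (varpi x0) (varpi y)); [exists x0 | exists y | rewrite x0_c cy] => //.
    by apply: connected_component_refl; exact: shell_sub_posregion.
  apply: (no_far z (connected_component_sub Cz)); last by rewrite wz.
  by rewrite -wz varpi_le_rad.
exists c => y Cy; rewrite leNgt; apply/negP => /ltW cy.
exact: no_far (connected_component_sub Cy) cy (ltW (varpi_lt y Cy)).
Qed.

Lemma component_unbounded : 8 * GM0 < 27 * Om ^+ 2 * Rr ^+ 3 ->
  ~ bounded3 (connected_component (posregion GM0 R0 Om Rr) x0).
Proof.
move=> crit [M boundM]; have [R0_x0 x0_Rr] := x0_shell.
set A := posregion GM0 R0 Om Rr; set r0 := Defs.rad x0.
have r0_gt0 : 0 < r0 := lt_trans R0_gt0 R0_x0.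
have Rr_gt0 : 0 < Rr := lt_trans r0_gt0 x0_Rr.
have [u [rad_u varpi_u dot_u]] := exists_equatorial_unit x0.
have ray s : 0 <= s -> Defs.rad (s *: u) = s /\ varpi (s *: u) = s.
  by move=> s_ge0; rewrite radZ varpiZ rad_u varpi_u mulr1 ger0_norm.
have rad_r0u : Defs.rad (r0 *: u) = r0 by case: (ray r0 (ltW r0_gt0)).
have dot_r0u : 0 <= dot3 x0 (r0 *: u).
  have -> : dot3 x0 (r0 *: u) = r0 * dot3 x0 u by rewrite /dot3 /x1 /x2 /x3 !mxE; ring.
  exact: mulr_ge0 (ltW r0_gt0) dot_u.
have [P [P_conn P_x0 P_u P_sphere]] := sphere_arc r0_gt0 (erefl r0) rad_r0u dot_r0u.
set Q := (fun s => s *: u) @` [set s | r0 <= s].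
have Q_conn : connected Q.
  apply: connected_continuous_connected.
    by apply/connected_intervalP => a b ra _ s /andP[a_s _]; exact: le_trans a_s.
  apply: continuous_subspaceT => s.
  exact: continuousZ (@cvg_id _ (nbhs s)) (@cst_continuous R _ u s).
have PQ_C : P `|` Q `<=` connected_component A x0.
  apply: connected_component_max; first by left.
    move=> z [/P_sphere rz | [s r0_s <-]].
      by apply: shell_sub_posregion; rewrite /shell /= rz.
    have s_gt0 : 0 < s := lt_le_trans r0_gt0 r0_s.
    have [rad_s varpi_s] := ray s (ltW s_gt0).
    split; first by rewrite rad_s (lt_le_trans R0_x0).
    by rewrite UpsilonE rad_s varpi_s; apply: ups_diag_gt0.
  by apply: connectedU => //; exists (r0 *: u); split => //; exists r0 => /=.
set s := Num.max r0 (M + 1).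
have r0_s : r0 <= s by rewrite le_max lexx.
have [rad_s _] := ray s (le_trans (ltW r0_gt0) r0_s).
have := boundM _ (PQ_C _ (or_intror (ex_intro2 _ _ s r0_s erefl))).
by rewrite rad_s leNgt lt_max ltrDl ltr01 orbT.
Qed.

End ComponentOfPositivity.

Theorem theorem1 (R : realType) (GM0 R0 Om Rr : R) :
  0 < GM0 -> 0 < R0 -> R0 < Rr ->
  forall x0 : 'rV[R]_3, shell R0 Rr x0 ->
  (bounded3 (connected_component (posregion GM0 R0 Om Rr) x0) <->
   Om ^+ 2 * R0 ^+ 3 / (2 * GM0) <= 4 / 27 * (R0 / Rr) ^+ 3).
Proof.
move=> GM0_gt0 R0_gt0 R0_Rr x0 x0_shell.
have Rr_gt0 := lt_trans R0_gt0 R0_Rr.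
rewrite kappa_le_iff //; split; last exact: component_bounded.
move=> bounded; rewrite leNgt; apply/negP => crit.
exact: component_unbounded crit bounded.
Qed.
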